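(* Let $\mathcal{H}_{A_1},\mathcal{H}_{A_2},\mathcal{H}_{B_1},\mathcal{H}_{B_2}$ be finite-dimensional Hilbert spaces with fixed reference bases of $\mathcal{H}_{A_1}$ and $\mathcal{H}_{A_2}$ (and the product basis on $\mathcal{H}_{A_1}\otimes\mathcal{H}_{A_2}$). For all states $\rho_{A_1B_1}$ and $\rho_{A_2B_2}$, $$C^{A_1A_2|B_1B_2}_f(\rho_{A_1B_1}\otimes\rho_{A_2B_2})=C^{A_1|B_1}_f(\rho_{A_1B_1})+C^{A_2|B_2}_f(\rho_{A_2B_2}).$$
   Context: $S$ is the von Neumann entropy. For a split $X|Y$ where $X$ has reference basis $\{|k\rangle_X\}$, $\Delta_X(\rho)=\sum_k(|k\rangle\langle k|_X\otimes I_Y)\rho(|k\rangle\langle k|_X\otimes I_Y)$, and the IQ coherence of formation is $C^{X|Y}_f(\rho_{XY})=\min\sum_ip_iS(\Delta_X(|\psi_i\rangle\langle\psi_i|_{XY}))$ over all pure-state decompositions $\rho_{XY}=\sum_ip_i|\psi_i\rangle\langle\psi_i|_{XY}$. *)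

From HB Require Import structures.
From mathcomp Require Import all_boot all_order all_algebra.
From mathcomp Require Import complex.
From mathcomp Require Import boolp classical_sets reals exp.
Set Implicit Arguments. Unset Strict Implicit. Unset Printing Implicit Defensive.
Import Order.TTheory GRing.Theory Num.Theory.
Local Open Scope ring_scope.

Section QDefs.
Variable R : realType.
Local Notation C := R[i].

(* An operator on the Hilbert space C^T, written in the (reference) basis
   {|t>, t : T}, as its matrix entries  A x y = <x|A|y>. *)
Definition op (T : finType) := T -> T -> C.

Definition op_mx (T : finType) (A : op T) : 'M[C]_#|T| :=
  \matrix_(i, j) A (enum_val i) (enum_val j).

Definition spectrum (T : finType) (A : op T) : seq C :=
  projT1 (closed_field_poly_normal (char_poly (op_mx A))).

(* von Neumann entropy S(rho) = - sum_k l_k ln l_k over the eigenvalues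
   (ln 0 = 0 in mathcomp-analysis, so 0 ln 0 = 0). *)
Definition vN_entropy (T : finType) (A : op T) : R :=
  - \sum_(l <- spectrum A) complex.Re l * ln (complex.Re l).

Definition trace_op (T : finType) (A : op T) : C := \sum_x A x x.

Definition psd_op (T : finType) (A : op T) : Prop :=
  (forall x y, A x y = (A y x)^*) /\
  (forall v : T -> C, 0 <= \sum_x \sum_y (v x)^* * A x y * v y).

Definition is_state (T : finType) (rho : op T) : Prop :=
  psd_op rho /\ trace_op rho = 1.

Definition unit_vector (T : finType) (psi : T -> C) : Prop :=
  \sum_x psi x * (psi x)^* = 1.

Definition proj_op (T : finType) (psi : T -> C) : op T :=
  fun x y => psi x * (psi y)^*.

(* Dephasing in the reference basis of the first factor of X|Y:
   Delta_X(rho) = sum_k (|k><k|_X (x) I_Y) rho (|k><k|_X (x) I_Y). *)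
Definition dephase (X Y : finType) (rho : op (X * Y)%type) : op (X * Y)%type :=
  fun u v => if u.1 == v.1 then rho u v else 0.

Definition pure_decomp (T : finType) (rho : op T) (n : nat)
    (p : 'I_n -> R) (psi : 'I_n -> T -> C) : Prop :=
  (forall i, 0 <= p i) /\ \sum_i p i = 1 /\ (forall i, unit_vector (psi i)) /\
  (forall x y, rho x y = \sum_i (Complex (p i) 0) * proj_op (psi i) x y).

Definition coh_form_values (X Y : finType) (rho : op (X * Y)%type) : set R :=
  [set c | exists n (p : 'I_n -> R) (psi : 'I_n -> (X * Y)%type -> C),
      pure_decomp rho p psi /\
      c = \sum_i p i * vN_entropy (dephase (proj_op (psi i)))].

(* IQ coherence of formation C_f^{X|Y}; the minimum is attained, so it
   equals the infimum. *)
Definition coh_form (X Y : finType) (rho : op (X * Y)%type) : R :=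
  inf (coh_form_values rho).

(* rho_{A1B1} (x) rho_{A2B2}, regarded as an operator on
   (A1 A2) | (B1 B2) (i.e. with the factors regrouped). *)
Definition tens_regroup (A1 B1 A2 B2 : finType)
    (r1 : op (A1 * B1)%type) (r2 : op (A2 * B2)%type)
  : op ((A1 * A2) * (B1 * B2))%type :=
  fun u v => r1 (u.1.1, u.2.1) (v.1.1, v.2.1) * r2 (u.1.2, u.2.2) (v.1.2, v.2.2).

End QDefs.

From HB Require Import structures.
From mathcomp Require Import all_boot all_order all_algebra.
From mathcomp Require Import complex.
From mathcomp Require Import boolp classical_sets reals exp.
From mathcomp Require Import ring lra.
Set Implicit Arguments. Unset Strict Implicit. Unset Printing Implicit Defensive.
Import Order.TTheory GRing.Theory Num.Theory.
Local Open Scope ring_scope.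

(* For a pure state psi on X (x) Y, Delta_X(|psi><psi|) = M M^* where M^* M is
   diagonal with entries q(x) = sum_y |psi(x, y)|^2; since M M^* and M^* M have
   the same nonzero eigenvalues, S(Delta_X(|psi><psi|)) is the Shannon entropy
   H(q).  Tensoring decompositions of rho1 and rho2 gives a
   decomposition of rho1 (x) rho2 whose dephased weights are product
   distributions, hence "<=".  Conversely, cutting a decomposition {p_i, psi_i}
   of rho1 (x) rho2 along the reference basis of A2B2 (resp. A1B1) gives a
   (non-normalized) decomposition of rho1 (resp. rho2), because the partial
   trace of rho1 (x) rho2 is rho1 (resp. rho2).  With P = |psi_i|^2 on
   A1 A2 B1 B2, the two resulting values average H(A1 | A2 B2) and
   H(A2 | A1 B1), and
     H(A1 A2) = H(A1) + H(A2 | A1) >= H(A1 | A2 B2) + H(A2 | A1 B1)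
   because conditioning does not increase the Shannon entropy. *)

Lemma sum_pairE (X Y : finType) (V : nmodType) (G : (X * Y)%type -> V) :
  \sum_t G t = \sum_x \sum_y G (x, y).
Proof. by rewrite pair_bigA; apply: eq_bigr => -[]. Qed.

Lemma big_enum_valT (T : finType) (V : Type) (idx : V) {op : Monoid.com_law idx}
    (G : T -> V) :
  \big[op/idx]_(k < #|T|) G (enum_val k) = \big[op/idx]_x G x.
Proof. by rewrite -big_enum_val. Qed.

Lemma sum_regroup (A1 A2 B1 B2 : finType) (V : nmodType)
    (F : ((A1 * A2) * (B1 * B2))%type -> V) :
  \sum_u F u =
  \sum_(t1 : (A1 * B1)%type) \sum_(t2 : (A2 * B2)%type) F ((t1.1, t2.1), (t1.2, t2.2)).
Proof.
rewrite sum_pairE (sum_pairE (fun t1 : (A1 * B1)%type => \sum_t2 _)).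
rewrite (sum_pairE (fun a => \sum_b F (a, b))) /=; apply: eq_bigr => a1 _.
under eq_bigr => a2 _ do rewrite (sum_pairE (fun b => F ((a1, a2), b))) /=.
under [RHS]eq_bigr => b1 _ do rewrite (sum_pairE (fun t2 : (A2 * B2)%type => _)) /=.
by rewrite exchange_big.
Qed.

(* Compare the determinants of the two block factorizations of [[X, A], [B, 1]]. *)
Lemma char_poly_mulmxC (F : comNzRingType) n m (A : 'M[F]_(n, m)) (B : 'M[F]_(m, n)) :
  'X^m * char_poly (A *m B) = 'X^n * char_poly (B *m A).
Proof.
rewrite /char_poly /char_poly_mx !map_mxM.
set a := map_mx polyC A; set b := map_mx polyC B.
pose L : 'M[{poly F}]_(n + m) := block_mx 1%:M 0 (- b) ('X%:M).
pose M : 'M[{poly F}]_(n + m) := block_mx ('X%:M) a b 1%:M.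
have LM : L *m M = block_mx ('X%:M) a 0 ('X%:M - b *m a).
  rewrite mulmx_block !mul1mx !mul0mx !addr0 !mulmx1 mul_mx_scalar mul_scalar_mx.
  by rewrite scalerN addNr addrC mulNmx.
have MM : M = block_mx 1%:M a 0 1%:M *m block_mx ('X%:M - a *m b) 0 b 1%:M.
  by rewrite mulmx_block !mul1mx !mul0mx !mulmx1 !add0r /M subrK.
have := congr1 determinant LM.
rewrite det_mulmx det_ublock det_lblock det1 mul1r det_scalar.
by rewrite MM det_mulmx det_ublock det_lblock !det1 !mul1r mulr1 det_scalar.
Qed.

Lemma prod_XsubC_perm_eq (F : idomainType) (s t : seq F) :
  \prod_(z <- s) ('X - z%:P) = \prod_(z <- t) ('X - z%:P) -> perm_eq s t.
Proof.
elim: s t => [|a s IH] t.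
  rewrite big_nil => /(congr1 (fun p : {poly F} => size p)).
  by rewrite size_prod_XsubC size_poly1; case: t.
rewrite big_cons => E.
have a_in_t : a \in t by rewrite -root_prod_XsubC -E rootM root_XsubC eqxx.
have Pt := perm_to_rem a_in_t.
move: E; rewrite (perm_big _ Pt) big_cons => /(mulfI (negbT (polyXsubC_eq0 a))) E.
by rewrite (permPr Pt) perm_cons; exact: IH.
Qed.

Section ShannonEntropy.
Variable R : realType.

Definition xlnx (x : R) : R := x * ln x.

Lemma xlnx0 : xlnx 0 = 0. Proof. by rewrite /xlnx mul0r. Qed.
Lemma xlnx1 : xlnx 1 = 0. Proof. by rewrite /xlnx ln1 mulr0. Qed.

Lemma xlnxM (x y : R) : 0 <= x -> 0 <= y -> xlnx (x * y) = xlnx x * y + x * xlnx y.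
Proof.
rewrite le_eqVlt => /predU1P[<- _|x0]; first by rewrite mul0r xlnx0 !mul0r addr0.
rewrite le_eqVlt => /predU1P[<-|y0]; first by rewrite mulr0 xlnx0 !mulr0 addr0.
by rewrite /xlnx lnM ?posrE //; ring.
Qed.

Definition shannon (X : finType) (q : X -> R) : R := - \sum_x xlnx (q x).

Definition shannon_mass (X : finType) (q : X -> R) : R :=
  xlnx (\sum_x q x) - \sum_x xlnx (q x).

Lemma shannon_ge0 (X : finType) (q : X -> R) :
  (forall x, 0 <= q x) -> \sum_x q x = 1 -> 0 <= shannon q.
Proof.
move=> q0 q1; rewrite /shannon oppr_ge0; apply: sumr_le0 => x _.
have qle : q x <= 1 by rewrite -q1 (bigD1 x) //= lerDl sumr_ge0.
by rewrite mulr_ge0_le0 // ln_le0.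
Qed.

Lemma shannon_prod (X1 X2 : finType) (q1 : X1 -> R) (q2 : X2 -> R) :
  (forall x, 0 <= q1 x) -> (forall x, 0 <= q2 x) ->
  \sum_x q1 x = 1 -> \sum_x q2 x = 1 ->
  shannon (fun a : (X1 * X2)%type => q1 a.1 * q2 a.2) = shannon q1 + shannon q2.
Proof.
move=> h1 h2 s1 s2; rewrite /shannon -opprD; congr (- _).
rewrite (sum_pairE (fun a : (X1 * X2)%type => xlnx (q1 a.1 * q2 a.2))) /=.
under eq_bigr => x _ do under eq_bigr => y _ do rewrite xlnxM //.
under eq_bigr => x _ do rewrite big_split /= -mulr_sumr -mulr_sumr s2 mulr1.
by rewrite big_split /= -mulr_suml s1 mul1r.
Qed.

Lemma shannon_mass_normalized (X : finType) (q : X -> R) :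
  (forall x, 0 <= q x) -> 0 < \sum_x q x ->
  (\sum_x q x) * shannon (fun x => q x / \sum_x q x) = shannon_mass q.
Proof.
set s := \sum_x q x => q0 s0.
have term x : s * xlnx (q x / s) = xlnx (q x) - q x * ln s.
  have [qx0|qx0] := eqVneq (q x) 0; first by rewrite qx0 /xlnx !(mul0r, mulr0, subr0).
  have qxp : 0 < q x by rewrite lt_def qx0 q0.
  rewrite /xlnx ln_div ?posrE // mulrA (mulrC s) mulfVK ?gt_eqF //; ring.
rewrite /shannon /shannon_mass mulrN mulr_sumr.
by under eq_bigr => x _ do rewrite term; rewrite sumrB -mulr_suml opprB.
Qed.

Lemma ln_le_subr1 (y : R) : 0 < y -> ln y <= y - 1.
Proof.
move=> y0; have h : -1 < y - 1 by rewrite ltrBrDl; lra.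
by have := le_ln1Dx h; rewrite addrC subrK.
Qed.

Lemma mul_ln_ratio_le (v s V T : R) : 0 <= v -> v <= s -> v <= V -> 0 < T ->
  v * ln s + v * ln V - xlnx v - v * ln T <= s * V / T - v.
Proof.
move=> v0 vs vV T0; have [->|vn0] := eqVneq v 0.
  rewrite !mul0r xlnx0 !subr0 add0r divr_ge0 ?mulr_ge0 ?(ltW T0) //.
    exact: le_trans vs.
  exact: le_trans vV.
have vp : 0 < v by rewrite lt_def vn0.
have sp : 0 < s by exact: lt_le_trans vs.
have Vp : 0 < V by exact: lt_le_trans vV.
have := ln_le_subr1 (_ : 0 < s * V / (v * T)).
rewrite divr_gt0 ?mulr_gt0 // => /(_ isT).
rewrite ln_div ?posrE ?mulr_gt0 // !lnM ?posrE // => /(ler_wpM2l v0) le_v.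
have -> : s * V / T - v = v * (s * V / (v * T) - 1) by field; rewrite vn0 gt_eqF.
have -> : v * ln s + v * ln V - xlnx v - v * ln T =
          v * (ln s + ln V - (ln v + ln T)) by rewrite /xlnx; ring.
exact: le_v.
Qed.

Lemma xlnx_subadditive (J K : finType) (v : J -> K -> R) (s : J -> R) (V : K -> R)
    (T : R) :
  (forall j k, 0 <= v j k) -> (forall j, s j = \sum_k v j k) ->
  (forall k, V k = \sum_j v j k) -> T = \sum_j s j ->
  \sum_j xlnx (s j) + \sum_k xlnx (V k) <= \sum_j \sum_k xlnx (v j k) + xlnx T.
Proof.
move=> v0 sE VE TE.
have vs j k : v j k <= s j by rewrite sE (bigD1 k) //= lerDl sumr_ge0.
have vV j k : v j k <= V k by rewrite VE (bigD1 j) //= lerDl sumr_ge0.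
have T0 : 0 <= T by rewrite TE sumr_ge0 // => j _; rewrite sE sumr_ge0.
have [Tz|Tn0] := eqVneq T 0.
  have sz j : s j = 0.
    apply/eqP; move: Tz; rewrite TE => /eqP; rewrite psumr_eq0.
      by move=> /allP /(_ j (mem_index_enum _)).
    by move=> i _; rewrite sE sumr_ge0.
  have vz j k : v j k = 0 by apply/eqP; rewrite eq_le v0 andbT -(sz j) vs.
  rewrite Tz xlnx0 addr0 !big1 ?addr0 // => [j _|k _|j _].
  - by rewrite big1 // => k _; rewrite vz xlnx0.
  - by rewrite VE big1 ?xlnx0.
  - by rewrite sz xlnx0.
have Tp : 0 < T by rewrite lt_def Tn0.
have H : \sum_j \sum_k (v j k * ln (s j) + v j k * ln (V k) - xlnx (v j k) - v j k * ln T)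
   <= \sum_j \sum_k (s j * V k / T - v j k).
  by apply: ler_sum => j _; apply: ler_sum => k _; apply: mul_ln_ratio_le.
have SV : \sum_k V k = T.
  by rewrite TE (eq_bigr _ (fun k _ => VE k)) exchange_big; apply: eq_bigr => j _; rewrite sE.
have E1 : \sum_j \sum_k (s j * V k / T - v j k) = 0.
  under eq_bigr => j _ do rewrite sumrB -sE -mulr_suml -mulr_sumr SV.
  by rewrite sumrB -!mulr_suml -TE mulfK ?subrr.
have E2 : \sum_j \sum_k (v j k * ln (s j) + v j k * ln (V k) - xlnx (v j k) - v j k * ln T)
   = \sum_j xlnx (s j) + \sum_k xlnx (V k) - \sum_j \sum_k xlnx (v j k) - xlnx T.
  under eq_bigr => j _ do rewrite !sumrB big_split /= -mulr_suml -sE.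
  rewrite !sumrB big_split /= exchange_big /=.
  under [X in _ + X - _ - _ = _]eq_bigr => k _ do rewrite -mulr_suml -VE.
  under [X in _ - X = _]eq_bigr => j _ do rewrite -mulr_suml -sE.
  by rewrite -mulr_suml -TE.
by move: H; rewrite E2 E1; lra.
Qed.

End ShannonEntropy.

Section SquaredModulus.
Variable R : realType.
Local Notation C := R[i].
Local Notation rc := (real_complex R).

Definition sqnorm (z : C) : R := complex.Re z ^+ 2 + complex.Im z ^+ 2.

Lemma sqnorm_ge0 (z : C) : 0 <= sqnorm z.
Proof. by rewrite addr_ge0 // sqr_ge0. Qed.

Lemma sqnorm_eq0 (z : C) : sqnorm z = 0 -> z = 0.
Proof.
case: z => a b; rewrite /sqnorm /= => /eqP; rewrite paddr_eq0 ?sqr_ge0 // !sqrf_eq0.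
by case/andP => /eqP -> /eqP ->.
Qed.

Lemma sqnormM (z w : C) : sqnorm (z * w) = sqnorm z * sqnorm w.
Proof. by case: z w => a b [c d]; rewrite /sqnorm /=; ring. Qed.

Lemma sqnorm_real (r : R) : sqnorm (rc r) = r ^+ 2.
Proof. by rewrite /sqnorm /= expr0n addr0. Qed.

Lemma mul_conjC_sqnorm (z : C) : z * z^* = rc (sqnorm z).
Proof.
by case: z => a b; apply/eqP; rewrite /sqnorm eq_complex /=; apply/andP; split; apply/eqP; ring.
Qed.

Lemma sqnorm0 : sqnorm 0 = 0.
Proof. by rewrite /sqnorm /= expr0n addr0. Qed.

Lemma sqnorm1 : sqnorm 1 = 1.
Proof. by rewrite /sqnorm /= expr1n expr0n addr0. Qed.

Lemma conjC_mul_real (z : C) (r : R) : (z * rc r)^* = z^* * rc r.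
Proof.
by case: z => a b; apply/eqP; rewrite eq_complex /=; apply/andP; split; apply/eqP; ring.
Qed.

Lemma unit_vectorE (T : finType) (psi : T -> C) :
  unit_vector psi <-> \sum_t sqnorm (psi t) = 1.
Proof.
rewrite /unit_vector; under eq_bigr => t _ do rewrite mul_conjC_sqnorm.
by rewrite -rmorph_sum; split => [/complexI|->].
Qed.

Definition marginal (X Y : finType) (psi : (X * Y)%type -> C) (x : X) : R :=
  \sum_y sqnorm (psi (x, y)).

Lemma marginal_ge0 (X Y : finType) (psi : (X * Y)%type -> C) x : 0 <= marginal psi x.
Proof. by rewrite sumr_ge0 // => y _; apply: sqnorm_ge0. Qed.

Lemma sum_marginal (X Y : finType) (psi : (X * Y)%type -> C) :
  \sum_x marginal psi x = \sum_t sqnorm (psi t).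
Proof. by rewrite sum_pairE. Qed.

Lemma unit_vector_marginal (X Y : finType) (psi : (X * Y)%type -> C) :
  unit_vector psi -> \sum_x marginal psi x = 1.
Proof. by rewrite sum_marginal => /unit_vectorE. Qed.

Lemma shannon_marginal_ge0 (X Y : finType) (psi : (X * Y)%type -> C) :
  unit_vector psi -> 0 <= shannon (marginal psi).
Proof. by move/unit_vector_marginal; apply: shannon_ge0; apply: marginal_ge0. Qed.

End SquaredModulus.

Section DephasedPureState.
Variable R : realType.
Local Notation C := R[i].
Local Notation rc := (real_complex R).
Local Open Scope sesquilinear_scope.

Lemma spectrum_char_poly (T : finType) (A : op R T) :
  char_poly (op_mx A) = \prod_(z <- spectrum A) ('X - z%:P).
Proof.
rewrite /spectrum; case: closed_field_poly_normal => r /= ->.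
by rewrite (monicP (char_poly_monic _)) scale1r.
Qed.

Lemma perm_eq_spectrum_factor (T : finType) k (A : op R T)
    (M : 'M[C]_(#|T|, k)) (N : 'M[C]_(k, #|T|)) (d : 'rV[C]_k) :
  op_mx A = M *m N -> N *m M = diag_mx d ->
  perm_eq (nseq k 0 ++ spectrum A) (nseq #|T| 0 ++ [seq d 0 i | i <- enum 'I_k]).
Proof.
move=> AMN NMd; apply: prod_XsubC_perm_eq.
rewrite !big_cat /= !big_nseq !iter_mulr !subr0 !mulr1 -spectrum_char_poly AMN.
rewrite char_poly_mulmxC NMd char_poly_trig ?diag_mx_is_trig // big_map big_enum /=.
by congr (_ * _); apply: eq_bigr => i _; rewrite mxE eqxx mulr1n.
Qed.

Definition dephase_factor (X Y : finType) (psi : (X * Y)%type -> C) :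
    'M[C]_(#|{: X * Y}|, #|X|) :=
  \matrix_(i, k) (if (enum_val i).1 == enum_val k then psi (enum_val i) else 0).

Lemma op_mx_dephase_proj (X Y : finType) (psi : (X * Y)%type -> C) :
  op_mx (dephase (proj_op psi)) = dephase_factor psi *m (dephase_factor psi)^t*.
Proof.
apply/matrixP => i j; rewrite !mxE (bigD1 (enum_rank (enum_val i).1)) //= big1 ?addr0.
  rewrite !mxE enum_rankK eqxx /dephase /proj_op eq_sym.
  by case: eqP => _; rewrite ?conjC0 ?mulr0.
move=> k kn; rewrite !mxE; case: eqP => [E|]; last by rewrite mul0r.
by move: kn; rewrite E enum_valK eqxx.
Qed.

Lemma dephase_factor_gram (X Y : finType) (psi : (X * Y)%type -> C) :
  (dephase_factor psi)^t* *m dephase_factor psi =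
  diag_mx (\row_k rc (marginal psi (enum_val k))).
Proof.
apply/matrixP => k k'; rewrite !mxE.
under eq_bigr => i _ do rewrite !mxE.
rewrite (big_enum_valT (fun t => (if t.1 == enum_val k then psi t else 0)^* *
                                (if t.1 == enum_val k' then psi t else 0))).
have [<-|nk] := eqVneq k k'; last first.
  rewrite mulr0n; apply: big1 => t _.
  case: eqP => [->|]; last by rewrite conjC0 mul0r.
  by rewrite (inj_eq enum_val_inj) (negbTE nk) mulr0.
rewrite sum_pairE /= (bigD1 (enum_val k)) //= [X in _ + X]big1 ?addr0 => [|x xn].
  rewrite mulr1n /marginal rmorph_sum; apply: eq_bigr => y _.
  by rewrite eqxx mulrC mul_conjC_sqnorm.
by apply: big1 => y _; rewrite (negbTE xn) conjC0 mul0r.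
Qed.

Lemma vN_entropy_dephase_proj (X Y : finType) (psi : (X * Y)%type -> C) :
  vN_entropy (dephase (proj_op psi)) = shannon (marginal psi).
Proof.
have Hperm := perm_eq_spectrum_factor (op_mx_dephase_proj psi) (dephase_factor_gram psi).
have zeros n : \sum_(l <- nseq n (0 : C)) complex.Re l * ln (complex.Re l) = 0.
  by rewrite big1_seq // => l /andP[_]; rewrite mem_nseq => /andP[_ /eqP ->]; rewrite mul0r.
rewrite /vN_entropy /shannon; congr (- _).
transitivity (\sum_(l <- nseq #|X| 0 ++ spectrum (dephase (proj_op psi)))
                complex.Re l * ln (complex.Re l)).
  by rewrite big_cat /= zeros add0r.
rewrite (perm_big _ Hperm) big_cat /= zeros add0r.
rewrite big_map big_enum /= -(big_enum_valT (fun x => xlnx (marginal psi x))).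
by apply: eq_bigr => k _; rewrite mxE.
Qed.

End DephasedPureState.

Section PureDecompositions.
Variable R : realType.
Local Notation C := R[i].
Local Notation rc := (real_complex R).
Local Open Scope sesquilinear_scope.

Definition pure_decomp_fin (T I : finType) (rho : op R T) (p : I -> R)
    (psi : I -> T -> C) : Prop :=
  [/\ forall i, 0 <= p i, \sum_i p i = 1, forall i, unit_vector (psi i) &
      forall x y, rho x y = \sum_i rc (p i) * proj_op (psi i) x y].

Definition decomp_value (X Y I : finType) (p : I -> R)
    (psi : I -> (X * Y)%type -> C) : R :=
  \sum_i p i * shannon (marginal (psi i)).

Lemma coh_form_values_decomp (X Y I : finType) (rho : op R (X * Y)%type)
    (p : I -> R) (psi : I -> (X * Y)%type -> C) :
  pure_decomp_fin rho p psi -> coh_form_values rho (decomp_value p psi).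
Proof.
case=> p0 p1 psiu dec.
exists #|I|, (fun k => p (enum_val k)), (fun k => psi (enum_val k)); split.
  split=> //; split; first by rewrite big_enum_valT.
  split=> // x y; rewrite dec.
  exact: esym (big_enum_valT (fun i => rc (p i) * proj_op (psi i) x y)).
rewrite /decomp_value -(big_enum_valT (fun i => p i * shannon (marginal (psi i)))).
by apply: eq_bigr => k _; rewrite vN_entropy_dephase_proj.
Qed.

Lemma coh_form_valuesP (X Y : finType) (rho : op R (X * Y)%type) c :
  coh_form_values rho c ->
  exists n (p : 'I_n -> R) psi, pure_decomp_fin rho p psi /\ c = decomp_value p psi.
Proof.
move=> [n [p [psi [[p0 [p1 [psiu dec]]] ->]]]]; exists n, p, psi; split; first by split.
by apply: eq_bigr => i _; rewrite vN_entropy_dephase_proj.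
Qed.

Lemma coh_form_values_ge0 (X Y : finType) (rho : op R (X * Y)%type) c :
  coh_form_values rho c -> 0 <= c.
Proof.
move=> /coh_form_valuesP [n [p [psi [[p0 _ psiu _] ->]]]].
by apply: sumr_ge0 => i _; rewrite mulr_ge0 // shannon_marginal_ge0.
Qed.

Lemma hermsymmx_op_mx (T : finType) (A : op R T) :
  (forall x y, A x y = (A y x)^*) -> op_mx A \is hermsymmx.
Proof.
move=> Ah; apply/is_hermitianmxP; rewrite expr0 scale1r; apply/matrixP => a b.
by rewrite !mxE Ah.
Qed.

(* The weights are the eigenvalues of [op_mx rho], the vectors the conjugated
   rows of the unitary that diagonalizes it. *)
Lemma state_pure_decomp (T : finType) (rho : op R T) :
  is_state rho -> exists n p psi, @pure_decomp R T rho n p psi.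
Proof.
move=> [[rho_herm rho_psd] rho_tr].
pose M := op_mx rho.
have Mh : M \is hermsymmx by apply: hermsymmx_op_mx.
have /orthomx_spectralP ME := hermitian_normalmx Mh.
have dreal := hermitian_spectral_diag_real Mh.
move: ME dreal; set P := spectralmx M; set d := spectral_diag M => ME dreal.
have PP : P *m P ^t* = 1%:M.
  by apply/unitarymxP; apply: spectral_unitarymx.
rewrite invmx_unitary ?spectral_unitarymx // in ME.
have dR k : rc (complex.Re (d 0 k)) = d 0 k.
  by apply: RRe_real; move/mxOverP: dreal; apply.
have Mab a b : M a b = \sum_k (P k a)^* * d 0 k * P k b.
  by rewrite ME mul_mx_diag !mxE; apply: eq_bigr => k _; rewrite !mxE.
have Prow k : \sum_a P k a * (P k a)^* = 1.
  have := congr1 (fun A : 'M_#|T| => A k k) PP; rewrite !mxE eqxx mulr1n => <-.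
  by apply: eq_bigr => a _; rewrite !mxE.
have dE k : d 0 k = \sum_a \sum_b P k a * M a b * (P k b)^*.
  have : diag_mx d = P *m M *m P ^t*.
    by rewrite ME !mulmxA PP mul1mx -mulmxA PP mulmx1.
  move/(congr1 (fun A : 'M_#|T| => A k k)); rewrite !mxE eqxx mulr1n => ->.
  rewrite exchange_big; apply: eq_bigr => b _; rewrite !mxE mulr_suml.
  by apply: eq_bigr => a _; rewrite !mxE.
have d_ge0 k : 0 <= complex.Re (d 0 k).
  rewrite -ler0c dR dE.
  have := rho_psd (fun t => (P k (enum_rank t))^*).
  rewrite -big_enum_valT; under eq_bigr => a _ do rewrite -big_enum_valT.
  congr (_ <= _); apply: eq_bigr => a _; apply: eq_bigr => b _.
  by rewrite !enum_valK conjCK /M mxE.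
have rhoE x y : rho x y = M (enum_rank x) (enum_rank y) by rewrite /M mxE !enum_rankK.
exists #|T|, (fun k => complex.Re (d 0 k)), (fun k t => (P k (enum_rank t))^*).
split=> //; split; last split.
- apply: complexI; rewrite rmorph_sum /= -[rc 1]/(1 : C) -rho_tr /trace_op.
  under eq_bigr => k _ do rewrite dR -[d 0 k]mulr1 -(Prow k) mulr_sumr.
  rewrite exchange_big -(big_enum_valT (fun x => rho x x)); apply: eq_bigr => a _.
  by rewrite rhoE enum_valK Mab; apply: eq_bigr => k _; ring.
- move=> k; rewrite /unit_vector -big_enum_valT -(Prow k).
  by apply: eq_bigr => a _; rewrite enum_valK conjCK mulrC.
- move=> x y; rewrite rhoE Mab; apply: eq_bigr => k _.
  by rewrite /proj_op conjCK -[Complex _ 0]/(rc (complex.Re (d 0 k))) dR; ring.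
Qed.

Lemma has_inf_coh_form_values (X Y : finType) (rho : op R (X * Y)%type) :
  is_state rho -> has_inf (coh_form_values rho).
Proof.
move=> /state_pure_decomp [n [p [psi pd]]]; split.
  by exists (\sum_i p i * vN_entropy (dephase (proj_op (psi i)))), n, p, psi.
by exists 0 => c /coh_form_values_ge0.
Qed.

Definition sqnorm_vec (T : finType) (phi : T -> C) : R := \sum_t sqnorm (phi t).

Lemma sqnorm_vec_ge0 (T : finType) (phi : T -> C) : 0 <= sqnorm_vec phi.
Proof. by apply: sumr_ge0 => t _; apply: sqnorm_ge0. Qed.

Lemma sqnorm_vec_eq0 (T : finType) (phi : T -> C) : sqnorm_vec phi = 0 -> phi =1 (fun=> 0).
Proof.
move=> /eqP; rewrite psumr_eq0 => [/allP phi0 t|t _]; last exact: sqnorm_ge0.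
by apply: sqnorm_eq0; apply/eqP/phi0; rewrite mem_index_enum.
Qed.

(* The zero vector is sent to the basis vector [e0]; it only ever gets weight 0. *)
Definition normalize (T : finType) (e0 : T) (phi : T -> C) : T -> C :=
  if 0 < sqnorm_vec phi then fun t => phi t * rc (Num.sqrt (sqnorm_vec phi))^-1
  else fun t => if t == e0 then 1 else 0.

Lemma normalize_unit (T : finType) (e0 : T) (phi : T -> C) :
  unit_vector (normalize e0 phi).
Proof.
apply/unit_vectorE; rewrite /normalize; case: ifP => sp.
  under eq_bigr => t _ do rewrite sqnormM sqnorm_real.
  by rewrite -mulr_suml exprVn sqr_sqrtr ?ltW // mulfV ?gt_eqF.
rewrite (bigD1 e0) //= eqxx sqnorm1 big1 ?addr0 // => t /negbTE ->.
exact: sqnorm0.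
Qed.

Lemma proj_op_normalize (T : finType) (e0 : T) (phi : T -> C) x y :
  rc (sqnorm_vec phi) * proj_op (normalize e0 phi) x y = proj_op phi x y.
Proof.
rewrite /normalize /proj_op; case: ifP => sp; last first.
  have sz : sqnorm_vec phi = 0 by apply/le_anti; rewrite sqnorm_vec_ge0 leNgt sp.
  by rewrite sz !(sqnorm_vec_eq0 sz) rmorph0 !mul0r.
set c := (Num.sqrt _)^-1.
have sc : sqnorm_vec phi * c ^+ 2 = 1.
  by rewrite exprVn sqr_sqrtr ?ltW // mulfV ?gt_eqF.
transitivity (phi x * (phi y)^* * rc (sqnorm_vec phi * c ^+ 2)).
  by rewrite conjC_mul_real rmorphM rmorphXn; ring.
by rewrite sc rmorph1 mulr1.
Qed.

Lemma shannon_marginal_normalize (X Y : finType) (e0 : X * Y) (phi : (X * Y)%type -> C) :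
  sqnorm_vec phi * shannon (marginal (normalize e0 phi)) = shannon_mass (marginal phi).
Proof.
have [sp|sn] := ltP 0 (sqnorm_vec phi).
  have -> : marginal (normalize e0 phi) = fun x => marginal phi x / \sum_x marginal phi x.
    apply: funext => x; rewrite /normalize sp sum_marginal /marginal mulr_suml.
    by apply: eq_bigr => y _; rewrite sqnormM sqnorm_real exprVn sqr_sqrtr // ltW.
  rewrite -[sqnorm_vec phi]sum_marginal shannon_mass_normalized //.
    exact: marginal_ge0.
  by rewrite sum_marginal.
have sz : sqnorm_vec phi = 0 by apply/le_anti; rewrite sn sqnorm_vec_ge0.
have -> : marginal phi = fun=> 0.
  apply: funext => x; rewrite /marginal big1 // => y _.
  by rewrite (sqnorm_vec_eq0 sz) sqnorm0.
by rewrite sz mul0r /shannon_mass xlnx0 !big1_eq xlnx0 subr0.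
Qed.

Lemma coh_form_values_unnormalized (X Y I J : finType) (rho : op R (X * Y)%type)
    (p : I -> R) (Phi : I -> J -> (X * Y)%type -> C) :
  (forall i, 0 <= p i) -> trace_op rho = 1 ->
  (forall x y, rho x y = \sum_i \sum_j rc (p i) * proj_op (Phi i j) x y) ->
  coh_form_values rho (\sum_i p i * \sum_j shannon_mass (marginal (Phi i j))).
Proof.
move=> p0 rho_tr dec.
have [e0] : inhabited (X * Y)%type.
  case: (pickP (@predT (X * Y)%type)) => [e _|none]; first exact: inhabits e.
  move: rho_tr; rewrite /trace_op big1 => [/eqP|x _]; last by have := none x.
  by rewrite eq_sym oner_eq0.
pose q (ij : (I * J)%type) := p ij.1 * sqnorm_vec (Phi ij.1 ij.2).
pose psi (ij : (I * J)%type) := normalize e0 (Phi ij.1 ij.2).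
have decq : pure_decomp_fin rho q psi.
  split.
  - by move=> ij; rewrite mulr_ge0 ?sqnorm_vec_ge0.
  - apply: complexI; rewrite rmorph_sum /= -[rc 1]/(1 : C) -rho_tr /trace_op.
    under [RHS]eq_bigr => x _ do rewrite dec.
    rewrite (sum_pairE (fun ij : (I * J)%type => rc (q ij))) [RHS]exchange_big /=.
    apply: eq_bigr => i _; rewrite [RHS]exchange_big; apply: eq_bigr => j _.
    rewrite /q /sqnorm_vec /= rmorphM rmorph_sum /= mulr_sumr; apply: eq_bigr => t _.
    by rewrite /proj_op mul_conjC_sqnorm.
  - by move=> ij; apply: normalize_unit.
  - move=> x y; rewrite dec (sum_pairE (fun ij : (I * J)%type => _)) /=.
    apply: eq_bigr => i _; apply: eq_bigr => j _.
    by rewrite /q /psi /= rmorphM -mulrA proj_op_normalize.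
have := coh_form_values_decomp decq; congr (coh_form_values _ _).
rewrite /decomp_value (sum_pairE (fun ij : (I * J)%type => q ij * _)) /=.
apply: eq_bigr => i _; rewrite mulr_sumr; apply: eq_bigr => j _.
by rewrite /q /psi /= -mulrA shannon_marginal_normalize.
Qed.

End PureDecompositions.

Section TensorProduct.
Variable R : realType.
Local Notation C := R[i].
Local Notation rc := (real_complex R).
Variables A1 A2 B1 B2 : finType.
Local Notation U := ((A1 * A2) * (B1 * B2))%type.

Definition tens_vec (psi1 : (A1 * B1)%type -> C) (psi2 : (A2 * B2)%type -> C) : U -> C :=
  fun u => psi1 (u.1.1, u.2.1) * psi2 (u.1.2, u.2.2).

Lemma marginal_tens_vec (psi1 : (A1 * B1)%type -> C) (psi2 : (A2 * B2)%type -> C) :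
  marginal (tens_vec psi1 psi2) = fun a => marginal psi1 a.1 * marginal psi2 a.2.
Proof.
apply: funext => -[a1 a2]; rewrite /marginal /tens_vec /= sum_pairE /= mulr_suml.
by apply: eq_bigr => b1 _; rewrite mulr_sumr; apply: eq_bigr => b2 _; rewrite sqnormM.
Qed.

Lemma proj_op_tens_vec (psi1 : (A1 * B1)%type -> C) (psi2 : (A2 * B2)%type -> C) u v :
  proj_op (tens_vec psi1 psi2) u v = tens_regroup (proj_op psi1) (proj_op psi2) u v.
Proof. by rewrite /proj_op /tens_vec /tens_regroup rmorphM; ring. Qed.

Lemma coh_form_values_tens (r1 : op R (A1 * B1)%type) (r2 : op R (A2 * B2)%type) c1 c2 :
  coh_form_values r1 c1 -> coh_form_values r2 c2 ->
  coh_form_values (tens_regroup r1 r2) (c1 + c2).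
Proof.
move=> /coh_form_valuesP [n1 [p1 [psi1 [[p10 p11 psi1u dec1] ->]]]].
move=> /coh_form_valuesP [n2 [p2 [psi2 [[p20 p21 psi2u dec2] ->]]]].
pose p (ij : ('I_n1 * 'I_n2)%type) := p1 ij.1 * p2 ij.2.
pose psi (ij : ('I_n1 * 'I_n2)%type) := tens_vec (psi1 ij.1) (psi2 ij.2).
have dec : pure_decomp_fin (tens_regroup r1 r2) p psi.
  split.
  - by move=> ij; rewrite mulr_ge0.
  - rewrite (sum_pairE p) /p /=.
    by under eq_bigr => i _ do rewrite -mulr_sumr p21 mulr1.
  - move=> [i j]; apply/unit_vectorE; rewrite -sum_marginal marginal_tens_vec.
    rewrite (sum_pairE (fun a : (A1 * A2)%type => _)) /=.
    under eq_bigr => a1 _ do rewrite -mulr_sumr unit_vector_marginal // mulr1.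
    exact: unit_vector_marginal.
  - move=> u v; rewrite /tens_regroup dec1 dec2 mulr_suml.
    rewrite (sum_pairE (fun ij : ('I_n1 * 'I_n2)%type => _)) /=.
    apply: eq_bigr => i _; rewrite mulr_sumr; apply: eq_bigr => j _.
    by rewrite proj_op_tens_vec /tens_regroup /p rmorphM; ring.
have shannon_psi i j : shannon (marginal (psi (i, j))) =
    shannon (marginal (psi1 i)) + shannon (marginal (psi2 j)).
  rewrite marginal_tens_vec shannon_prod //; try exact: marginal_ge0.
  - exact: unit_vector_marginal (psi1u i).
  - exact: unit_vector_marginal (psi2u j).
have := coh_form_values_decomp dec; congr (coh_form_values _ _).
rewrite /decomp_value (sum_pairE (fun ij : ('I_n1 * 'I_n2)%type => p ij * _)) /=.
under eq_bigr => i _ do under eq_bigr => j _ do rewrite shannon_psi /p /= mulrDr.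
under eq_bigr => i _ do rewrite big_split /=.
rewrite big_split /=; congr (_ + _).
  apply: eq_bigr => i _; under eq_bigr => j _ do rewrite mulrAC.
  by rewrite -mulr_sumr p21 mulr1.
rewrite exchange_big /=; apply: eq_bigr => j _.
by under eq_bigr => i _ do rewrite -mulrA; rewrite -mulr_suml p11 mul1r.
Qed.

Definition slice1 (psi : U -> C) (t2 : (A2 * B2)%type) : (A1 * B1)%type -> C :=
  fun t1 => psi ((t1.1, t2.1), (t1.2, t2.2)).

Definition slice2 (psi : U -> C) (t1 : (A1 * B1)%type) : (A2 * B2)%type -> C :=
  fun t2 => psi ((t1.1, t2.1), (t1.2, t2.2)).

Section PartialTraces.
Variables (r1 : op R (A1 * B1)%type) (r2 : op R (A2 * B2)%type).
Variables (I : finType) (p : I -> R) (psi : I -> U -> C).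
Hypothesis dec : forall u v, tens_regroup r1 r2 u v = \sum_i rc (p i) * proj_op (psi i) u v.

Lemma tens_regroup_slice1 : trace_op r2 = 1 ->
  forall x y, r1 x y = \sum_i \sum_t2 rc (p i) * proj_op (slice1 (psi i) t2) x y.
Proof.
move=> r2_tr x y; rewrite exchange_big /=.
transitivity (\sum_t2 tens_regroup r1 r2 ((x.1, t2.1), (x.2, t2.2))
                                         ((y.1, t2.1), (y.2, t2.2))).
  rewrite /tens_regroup /=; under eq_bigr => t2 _ do rewrite -!surjective_pairing.
  by rewrite -mulr_sumr -/(trace_op r2) r2_tr mulr1.
by apply: eq_bigr => t2 _; rewrite dec.
Qed.

Lemma tens_regroup_slice2 : trace_op r1 = 1 ->
  forall x y, r2 x y = \sum_i \sum_t1 rc (p i) * proj_op (slice2 (psi i) t1) x y.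
Proof.
move=> r1_tr x y; rewrite exchange_big /=.
transitivity (\sum_t1 tens_regroup r1 r2 ((t1.1, x.1), (t1.2, x.2))
                                         ((t1.1, y.1), (t1.2, y.2))).
  rewrite /tens_regroup /=; under eq_bigr => t1 _ do rewrite -!surjective_pairing.
  by rewrite -mulr_suml -/(trace_op r1) r1_tr mul1r.
by apply: eq_bigr => t1 _; rewrite dec.
Qed.

End PartialTraces.

Lemma shannon_marginal_ge_slices (psi : U -> C) : unit_vector psi ->
  \sum_t2 shannon_mass (marginal (slice1 psi t2)) +
  \sum_t1 shannon_mass (marginal (slice2 psi t1)) <= shannon (marginal psi).
Proof.
move/unit_vectorE => psi_unit.
pose m1 (a1 : A1) := \sum_a2 marginal psi (a1, a2).
(* H(A1) >= H(A1 | A2 B2) *)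
have H1 : \sum_t2 xlnx (\sum_a1 marginal (slice1 psi t2) a1) + \sum_a1 xlnx (m1 a1)
    <= \sum_t2 \sum_a1 xlnx (marginal (slice1 psi t2) a1) + xlnx 1.
  apply: xlnx_subadditive => [t2 a1|//|a1|]; first exact: marginal_ge0.
    rewrite /m1 (sum_pairE (fun t2 : (A2 * B2)%type => _)) /=.
    by apply: eq_bigr => a2 _; rewrite /marginal sum_pairE exchange_big.
  rewrite -psi_unit sum_regroup exchange_big /=; apply: eq_bigr => t2 _.
  by rewrite sum_marginal.
(* H(A2 | A1) >= H(A2 | A1 B1) *)
have H2 : \sum_a1 (\sum_b1 xlnx (\sum_a2 marginal (slice2 psi (a1, b1)) a2) +
                   \sum_a2 xlnx (marginal psi (a1, a2)))
    <= \sum_a1 (\sum_b1 \sum_a2 xlnx (marginal (slice2 psi (a1, b1)) a2) + xlnx (m1 a1)).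
  apply: ler_sum => a1 _.
  apply: xlnx_subadditive => [b1 a2|//|a2|]; first exact: marginal_ge0.
    by rewrite /marginal sum_pairE.
  by rewrite /m1 [RHS]exchange_big; apply: eq_bigr => a2 _; rewrite /marginal sum_pairE.
rewrite xlnx1 addr0 in H1; rewrite !big_split /= in H2.
rewrite /shannon_mass /shannon !sumrB.
rewrite (sum_pairE (fun a : (A1 * A2)%type => xlnx (marginal psi a))).
rewrite (sum_pairE (fun t1 : (A1 * B1)%type => xlnx (\sum_a2 marginal (slice2 psi t1) a2))).
rewrite (sum_pairE (fun t1 : (A1 * B1)%type => \sum_a2 xlnx (marginal (slice2 psi t1) a2))).
by move: H1 H2 => /=; lra.
Qed.

Lemma coh_form_values_tens_split (r1 : op R (A1 * B1)%type) (r2 : op R (A2 * B2)%type) c :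
  is_state r1 -> is_state r2 -> coh_form_values (tens_regroup r1 r2) c ->
  exists c1 c2, [/\ coh_form_values r1 c1, coh_form_values r2 c2 & c1 + c2 <= c].
Proof.
move=> [_ r1_tr] [_ r2_tr] /coh_form_valuesP [n [p [psi [[p0 _ psi_unit dec] ->]]]].
eexists; eexists; split.
- exact: coh_form_values_unnormalized p0 r1_tr (tens_regroup_slice1 dec r2_tr).
- exact: coh_form_values_unnormalized p0 r2_tr (tens_regroup_slice2 dec r1_tr).
- rewrite /decomp_value -big_split /=; apply: ler_sum => i _.
  by rewrite -mulrDr ler_wpM2l // shannon_marginal_ge_slices.
Qed.

End TensorProduct.

Lemma inf_eq_dominated (R : realType) (S T : set R) :
  (T !=set0)%classic -> has_lbound S -> (T `<=` S)%classic ->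
  (forall x, S x -> exists2 y, T y & y <= x) -> inf S = inf T.
Proof.
move=> T0 [l lS] TS dom.
have S0 : (S !=set0)%classic by case: T0 => y /TS; exists y.
have lT : has_lbound T by exists l => y /TS /lS.
apply/le_anti/andP; split.
  by apply: lb_le_inf T0 _ => y /TS; apply: ge_inf; exists l.
apply: lb_le_inf S0 _ => x /dom [y Ty yx]; apply: le_trans yx; exact: ge_inf lT _ Ty.
Qed.

Unset Implicit Arguments.
Theorem proposition11 (R : realType) (A1 A2 B1 B2 : finType)
    (r1 : op R (A1 * B1)%type) (r2 : op R (A2 * B2)%type) :
  is_state r1 -> is_state r2 ->
  coh_form (tens_regroup r1 r2) = coh_form r1 + coh_form r2.
Proof.
move=> s1 s2; rewrite /coh_form -inf_sumE; try exact: has_inf_coh_form_values.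
have [[c1 C1] _] := has_inf_coh_form_values s1.
have [[c2 C2] _] := has_inf_coh_form_values s2.
apply: inf_eq_dominated.
- by exists (c1 + c2), c1 => //; exists c2.
- by exists 0 => c /coh_form_values_ge0.
- by move=> _ [d1 D1 [d2 D2 <-]]; apply: coh_form_values_tens.
- move=> c /(coh_form_values_tens_split s1 s2) [d1 [d2 [D1 D2 le_c]]].
  by exists (d1 + d2) => //; exists d1 => //; exists d2.
Qed.
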